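(* Let $B \in \mathbb{R}^{r \times n}$ and $S\subseteq \mathbb{R}^n$, and let $S_B = \{ x^B - y^B \mid x,y \in \mathbb{R}^n_+,\ x - y \in S^* \}\subseteq\mathbb{R}^r$. Then $\sigma(S_B) = \sigma(B(\Sigma(S^* )))$.
   Context: $\mathbb{R}_+$ denotes the strictly positive reals. For $x\in\mathbb{R}^n_+$, $x^B\in\mathbb{R}^r_+$ has components $(x^B)_j=\prod_{i=1}^n x_i^{b_{ji}}$ (real exponents). $S^*=S\setminus\{0\}$. For $x\in\mathbb{R}^k$, $\sigma(x)$ is the componentwise sign vector in $\{-,0,+\}^k$; for $T\subseteq\mathbb{R}^k$, $\sigma(T)=\{\sigma(x)\mid x\in T\}$ and $\Sigma(T)=\sigma^{-1}(\sigma(T))$. $B(T)=\{Bx\mid x\in T\}$. *)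

From Stdlib Require Import Reals.
From mathcomp Require Import ssreflect ssrfun ssrbool eqtype ssrnat seq fintype bigop.

Set Implicit Arguments.
Unset Strict Implicit.

Local Open Scope R_scope.

Definition vec (n : nat) := 'I_n -> R.
Definition mat (r n : nat) := 'I_r -> 'I_n -> R.

Definition posvec (n : nat) (x : vec n) : Prop := forall i, 0 < x i.

Definition mono (r n : nat) (B : mat r n) (x : vec n) : vec r :=
  fun j => \big[Rmult/1]_(i < n) Rpower (x i) (B j i).

Definition matvec (r n : nat) (B : mat r n) (x : vec n) : vec r :=
  fun j => \big[Rplus/0]_(i < n) (B j i * x i).

Definition vsub (n : nat) (x y : vec n) : vec n := fun i => x i - y i.

Inductive sgn := SNeg | SZero | SPos.

Definition sign (a : R) : sgn :=
  match total_order_T a 0 with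
  | inleft (left _) => SNeg
  | inleft (right _) => SZero
  | inright _ => SPos
  end.

Definition sigma (k : nat) (x : vec k) : 'I_k -> sgn := fun i => sign (x i).

Definition sigmaSet (k : nat) (T : vec k -> Prop) (s : 'I_k -> sgn) : Prop :=
  exists x, T x /\ forall i, sigma x i = s i.

Definition SigmaSet (k : nat) (T : vec k -> Prop) (y : vec k) : Prop :=
  sigmaSet T (sigma y).

Definition Sstar (n : nat) (S : vec n -> Prop) (x : vec n) : Prop :=
  S x /\ exists i, x i <> 0.

Definition imageB (r n : nat) (B : mat r n) (T : vec n -> Prop) (z : vec r) : Prop :=
  exists x, T x /\ forall j, z j = matvec B x j.

Definition SB (r n : nat) (B : mat r n) (S : vec n -> Prop) (z : vec r) : Prop :=
  exists x y, posvec x /\ posvec y /\ Sstar S (vsub x y) /\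
    forall j, z j = mono B x j - mono B y j.

From Pilot Require Import Defs.
From Stdlib Require Import Reals.
From mathcomp Require Import ssreflect ssrfun ssrbool eqtype ssrnat seq fintype bigop.
From Stdlib Require Import Lra FunctionalExtensionality.

(* Write ln x for the componentwise logarithm of x in R^n_+.
   Since Rpower t b = exp (b * ln t), we have x^B = exp (B ln x), and exp is
   strictly increasing, so for all x, y in R^n_+ the sign vector of
   x^B - y^B equals that of B (ln x - ln y).  As ln is strictly increasing too,
   sigma (x - y) = sigma (ln x - ln y), so ln x - ln y lies in Sigma(S^* ) when
   x - y lies in S^*: this gives sigma(S_B) within sigma(B(Sigma(S^* ))).
   Conversely, given w in S^* and v with sigma v = sigma w, one solves, one
   coordinate at a time, p - q = w_i and ln p - ln q = v_i with p, q > 0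
   (q = w_i / (exp v_i - 1), p = q exp v_i, or p = q = 1 when w_i = 0);
   the resulting x, y give x^B - y^B with the sign vector of B v. *)

Local Open Scope R_scope.

Lemma sign_cases (a : R) :
  (sign a = SNeg /\ a < 0) \/ (sign a = SZero /\ a = 0) \/ (sign a = SPos /\ 0 < a).
Proof. by rewrite /sign; case: (total_order_T a 0) => [[H|H]|H]; auto. Qed.

Lemma sign_neg (a : R) : a < 0 -> sign a = SNeg.
Proof. by move=> H; case: (sign_cases a) => [[]|[[]|[]]] //; lra. Qed.

Lemma sign_zero (a : R) : a = 0 -> sign a = SZero.
Proof. by move=> H; case: (sign_cases a) => [[]|[[]|[]]] //; lra. Qed.

Lemma sign_pos (a : R) : 0 < a -> sign a = SPos.
Proof. by move=> H; case: (sign_cases a) => [[]|[[]|[]]] //; lra. Qed.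

Lemma sign_eq0 (a : R) : sign a = SZero -> a = 0.
Proof. by case: (sign_cases a) => [[-> _]|[[_ ->]|[-> _]]]. Qed.

Lemma sign_sub_increasing (P : R -> Prop) (f : R -> R) (a b : R) :
  (forall s t, P s -> P t -> s < t -> f s < f t) ->
  P a -> P b -> sign (f a - f b) = sign (a - b).
Proof.
move=> incr Pa Pb; case: (Rtotal_order a b) => [lt_ab|[<-|lt_ba]].
- by have := incr _ _ Pa Pb lt_ab => ?; rewrite !sign_neg //; lra.
- by rewrite !sign_zero //; lra.
- by have := incr _ _ Pb Pa lt_ba => ?; rewrite !sign_pos //; lra.
Qed.

Lemma sign_exp_sub (a b : R) : sign (exp a - exp b) = sign (a - b).
Proof. by apply: (@sign_sub_increasing (fun _ => True)) => // s t _ _; exact: exp_increasing. Qed.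

Lemma sign_ln_sub (a b : R) : 0 < a -> 0 < b -> sign (ln a - ln b) = sign (a - b).
Proof. by apply: (@sign_sub_increasing (fun t => 0 < t)) => // s t Ps _; exact: ln_increasing. Qed.

Definition lnvec {n : nat} (x : vec n) : vec n := fun i => ln (x i).

Lemma big_exp (n : nat) (f : 'I_n -> R) :
  \big[Rmult/1]_(i < n) exp (f i) = exp (\big[Rplus/0]_(i < n) f i).
Proof.
apply: (big_ind2 (fun a b => a = exp b)) => //; first by rewrite exp_0.
by move=> x1 x2 y1 y2 -> ->; rewrite exp_plus.
Qed.

Lemma mono_exp (r n : nat) (B : mat r n) (x : vec n) (j : 'I_r) :
  mono B x j = exp (matvec B (lnvec x) j).
Proof. by rewrite /mono /Rpower big_exp; congr exp; apply: eq_bigr => i _; ring. Qed.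

Lemma matvec_sub (r n : nat) (B : mat r n) (u w : vec n) (j : 'I_r) :
  matvec B u j - matvec B w j = matvec B (vsub u w) j.
Proof.
apply: (big_ind3 (fun a b c => a - b = c)); first lra.
- by move=> ? ? ? ? ? ? <- <-; ring.
- by move=> i _; rewrite /vsub; ring.
Qed.

Lemma sign_mono_sub (r n : nat) (B : mat r n) (x y : vec n) (j : 'I_r) :
  sign (mono B x j - mono B y j) = sign (matvec B (vsub (lnvec x) (lnvec y)) j).
Proof. by rewrite !mono_exp sign_exp_sub matvec_sub. Qed.

(* Scalar realization: if a and b have the same sign, there are p, q > 0 with
   p - q = a and ln p - ln q = b.  The witnesses are given explicitly. *)
Definition realize_q (a b : R) : R :=
  if Req_EM_T a 0 then 1 else a / (exp b - 1).

Definition realize_p (a b : R) : R := realize_q a b * exp b.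

Section ScalarRealization.
Variables a b : R.
Hypothesis same_sign : sign a = sign b.

(* q > 0: a and exp b - 1 have the sign of b, hence the same sign as each other. *)
Lemma realize_q_pos : 0 < realize_q a b.
Proof.
rewrite /realize_q; case: Req_EM_T => [a0|a_ne0] /=; first lra.
move: same_sign; have [[-> Ha]|[[_ Ha]|[-> Ha]]] := sign_cases a => //;
  have [[-> Hb]|[[-> Hb]|[-> Hb]]] := sign_cases b => // _;
  have := exp_increasing _ _ Hb; rewrite exp_0 => Heb.
- by apply: Rdiv_neg_neg; lra.
- by apply: Rdiv_lt_0_compat; lra.
Qed.

Lemma realize_p_pos : 0 < realize_p a b.
Proof. exact: Rmult_lt_0_compat realize_q_pos (exp_pos b). Qed.

(* a = 0 forces b = 0 and p = q = 1; otherwise exp b <> 1 and p - q = q (exp b - 1) = a. *)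
Lemma realize_sub : realize_p a b - realize_q a b = a.
Proof.
rewrite /realize_p /realize_q; case: Req_EM_T => [a0|a_ne0] /=.
- have b0 : b = 0 by apply: sign_eq0; rewrite -same_sign sign_zero.
  by rewrite b0 exp_0 a0; ring.
- have b_ne0 : b <> 0 by move=> b0; apply: a_ne0; apply: sign_eq0; rewrite same_sign sign_zero.
  have eb_ne1 : exp b - 1 <> 0.
  { by move=> E; apply: b_ne0; apply: exp_inv; rewrite exp_0; lra. }
  by field.
Qed.

Lemma realize_ln_sub : ln (realize_p a b) - ln (realize_q a b) = b.
Proof. by rewrite /realize_p ln_mult ?ln_exp; [ring | exact: realize_q_pos | exact: exp_pos]. Qed.

End ScalarRealization.

Lemma realize_vec {n : nat} (w v : vec n) :
  (forall i, Defs.sigma w i = Defs.sigma v i) ->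
  exists x y, posvec x /\ posvec y /\ vsub x y = w /\ vsub (lnvec x) (lnvec y) = v.
Proof.
move=> same_sigma.
exists (fun i => realize_p (w i) (v i)), (fun i => realize_q (w i) (v i)).
split; [|split; [|split]].
- by move=> i; apply: realize_p_pos; exact: same_sigma.
- by move=> i; apply: realize_q_pos; exact: same_sigma.
- by apply: functional_extensionality => i; apply: realize_sub; exact: same_sigma.
- by apply: functional_extensionality => i; apply: realize_ln_sub; exact: same_sigma.
Qed.

Lemma sigma_lnvec_sub (n : nat) (x y : vec n) (i : 'I_n) :
  posvec x -> posvec y -> Defs.sigma (vsub x y) i = Defs.sigma (vsub (lnvec x) (lnvec y)) i.
Proof. by move=> Hx Hy; rewrite /Defs.sigma /vsub /lnvec sign_ln_sub. Qed.

Theorem mainTheorem6 (r n : nat) (B : mat r n) (S : vec n -> Prop) :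
  forall s : 'I_r -> sgn,
    sigmaSet (SB B S) s <-> sigmaSet (imageB B (SigmaSet (Sstar S))) s.
Proof.
move=> s; split.
- (* x^B - y^B has the sign vector of B (ln x - ln y), and ln x - ln y lies
     in Sigma(S^* ) because it has the sign vector of x - y. *)
  move=> [z [[x [y [Hx [Hy [HS Hz]]]]] Hs]].
  exists (matvec B (vsub (lnvec x) (lnvec y))); split.
  + exists (vsub (lnvec x) (lnvec y)); split => //.
    by exists (vsub x y); split => // i; rewrite sigma_lnvec_sub.
  + by move=> j; rewrite -Hs /Defs.sigma Hz sign_mono_sub.
- (* Realize w in S^* and v with the same signs as x - y and ln x - ln y. *)
  move=> [z [[v [[w [HS Hw]] Hz]] Hs]].
  have [x [y [Hx [Hy [Hxy Hln]]]]] := realize_vec _ _ Hw.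
  exists (fun j => mono B x j - mono B y j); split.
  + by exists x, y; rewrite Hxy.
  + by move=> j; rewrite -Hs /Defs.sigma Hz sign_mono_sub Hln.
Qed.
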